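(* Let $(L_1,\preceq_1,\bot_1,\top_1)$ and $(L_2,\preceq_2,\bot_2,\top_2)$ be complete lattices, $(P,\leq)$ a poset, and $(\&_i,\swarrow^i,\nwarrow_i)$, $i=1,\dots,n$, adjoint triples with respect to $L_1,L_2,P$. Let $(A,B,R,\sigma)$ be a context over this frame. Then for every $a\in A$, $b\in B$, $x\in L_1$ and $y\in L_2$, $$\langle \phi_{b,y}^{\uparrow\downarrow},\phi_{b,y}^{\uparrow}\rangle \preceq \langle \phi_{a,x}^{\downarrow},\phi_{a,x}^{\downarrow\uparrow}\rangle \quad\text{if and only if}\quad x\,\&_{\sigma(a,b)}\, y\leq R(a,b).$$
   Context: An adjoint triple with respect to posets $P_1,P_2,P_3$ is a triple of maps $\&\colon P_1\times P_2\to P_3$, $\swarrow\colon P_3\times P_2\to P_1$, $\nwarrow\colon P_3\times P_1\to P_2$ such that $x\le_1 z\swarrow y \iff x\& y\le_3 z\iff y\le_2 z\nwarrow x$ for all $x\in P_1,y\in P_2,z\in P_3$. A context is a tuple $(A,B,R,\sigma)$ with $A,B$ non-empty sets, $R\colon A\times B\to P$ and $\sigma\colon A\times B\to\{1,\dots,n\}$. For $g\colon B\to L_2$ and $f\colon A\to L_1$ define $g^\uparrow(a)=\inf\{R(a,b)\swarrow^{\sigma(a,b)} g(b)\mid b\in B\}$ and $f^\downarrow(b)=\inf\{R(a,b)\nwarrow_{\sigma(a,b)} f(a)\mid a\in A\}$. A concept is a pair $\langle g,f\rangle$ with $g^\uparrow=f$ and $f^\downarrow=g$; concepts are ordered by $\langle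 g_1,f_1\rangle\preceq\langle g_2,f_2\rangle$ iff $g_1\le g_2$ pointwise. For $a\in A$, $x\in L_1$, the fuzzy-attribute $\phi_{a,x}\colon A\to L_1$ takes value $x$ at $a$ and $\bot_1$ elsewhere; for $b\in B$, $y\in L_2$, the fuzzy-object $\phi_{b,y}\colon B\to L_2$ takes value $y$ at $b$ and $\bot_2$ elsewhere. *)

From mathcomp Require Import all_boot all_order.
Set Implicit Arguments. Unset Strict Implicit. Unset Printing Implicit Defensive.
Import Order.Theory.
Local Open Scope order_scope.

Definition is_glb (d : Order.disp_t) (T : porderType d) (S : T -> Prop) (x : T) : Prop :=
  (forall y, S y -> x <= y) /\ (forall z, (forall y, S y -> z <= y) -> z <= x).

(* A complete lattice: a poset with an infimum operator on all subsets. *)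
Definition complete_inf (d : Order.disp_t) (T : porderType d) (inf : (T -> Prop) -> T) : Prop :=
  forall S, is_glb S (inf S).

Definition cl_bot (d : Order.disp_t) (T : porderType d) (inf : (T -> Prop) -> T) : T :=
  inf (fun _ => True).

Definition adjoint_triple (d1 d2 d3 : Order.disp_t)
  (P1 : porderType d1) (P2 : porderType d2) (P3 : porderType d3)
  (conj : P1 -> P2 -> P3) (sw : P3 -> P2 -> P1) (nw : P3 -> P1 -> P2) : Prop :=
  forall x y z, (x <= sw z y <-> conj x y <= z) /\ (conj x y <= z <-> y <= nw z x).

Definition up (d1 d2 d3 : Order.disp_t)
  (L1 : porderType d1) (L2 : porderType d2) (P : porderType d3)
  (inf1 : (L1 -> Prop) -> L1) (n : nat) (sw : 'I_n -> P -> L2 -> L1)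
  (A B : Type) (R : A -> B -> P) (sigma : A -> B -> 'I_n)
  (g : B -> L2) : A -> L1 :=
  fun a => inf1 (fun t => exists b, t = sw (sigma a b) (R a b) (g b)).

Definition down (d1 d2 d3 : Order.disp_t)
  (L1 : porderType d1) (L2 : porderType d2) (P : porderType d3)
  (inf2 : (L2 -> Prop) -> L2) (n : nat) (nw : 'I_n -> P -> L1 -> L2)
  (A B : Type) (R : A -> B -> P) (sigma : A -> B -> 'I_n)
  (f : A -> L1) : B -> L2 :=
  fun b => inf2 (fun t => exists a, t = nw (sigma a b) (R a b) (f a)).

Definition phi (T : eqType) (L : Type) (bot : L) (t : T) (v : L) : T -> L :=
  fun t' => if t' == t then v else bot.

Definition concept_le (d1 d2 : Order.disp_t) (L1 : porderType d1) (L2 : porderType d2)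
  (A B : Type) (c1 c2 : (B -> L2) * (A -> L1)) : Prop :=
  forall b, c1.1 b <= c2.1 b.

From mathcomp Require Import all_boot all_order.
Set Implicit Arguments. Unset Strict Implicit. Unset Printing Implicit Defensive.
Import Order.Theory.
Local Open Scope order_scope.

(* The derivation operators form an antitone Galois connection, so the
   comparison of the two concepts reduces to [phi_{b,y} <= phi_{a,x}^down]
   pointwise.  Evaluating a derivation on a fuzzy singleton, every component
   away from the singleton's point involves a bottom element and holds
   trivially by adjointness, leaving only [y <= R(a,b) nw x], i.e.
   [x & y <= R(a,b)]. *)

Section CompleteInf.

Variables (d : Order.disp_t) (T : porderType d) (inf : (T -> Prop) -> T).
Hypothesis inf_glb : complete_inf inf.

Lemma le_infP (S : T -> Prop) (t : T) : t <= inf S <-> (forall s, S s -> t <= s).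
Proof.
split=> [le_t_inf s Ss | lbt]; last exact: (proj2 (inf_glb S)).
exact: le_trans le_t_inf (proj1 (inf_glb S) s Ss).
Qed.

Lemma cl_bot_le (t : T) : cl_bot inf <= t.
Proof. exact: (proj1 (inf_glb _)). Qed.

End CompleteInf.

Section AdjointTriple.

Variables (d1 d2 d3 : Order.disp_t).
Variables (P1 : porderType d1) (P2 : porderType d2) (P3 : porderType d3).
Variables (conj : P1 -> P2 -> P3) (sw : P3 -> P2 -> P1) (nw : P3 -> P1 -> P2).
Hypothesis adj : adjoint_triple conj sw nw.

Lemma conj_le_nw x y z : conj x y <= z <-> y <= nw z x.
Proof. exact: (proj2 (adj x y z)). Qed.

Lemma le_sw_nw x y z : x <= sw z y <-> y <= nw z x.
Proof. exact: iff_trans (proj1 (adj x y z)) (conj_le_nw x y z). Qed.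

Lemma conj_bot_le (bot1 : P1) y z : (forall x, bot1 <= x) -> conj bot1 y <= z.
Proof. by move=> botP; apply/(proj1 (adj _ _ _)). Qed.

End AdjointTriple.

Lemma phi_forall (T : eqType) (L : Type) (bot : L) (t : T) (v : L)
    (Q : T -> L -> Prop) :
  (forall t', Q t' bot) -> (forall t', Q t' (phi bot t v t')) <-> Q t v.
Proof.
move=> Qbot; split=> [|Qtv t']; first by move/(_ t); rewrite /phi eqxx.
by rewrite /phi; case: eqP => [->|].
Qed.

Section Derivation.

Variables (d1 d2 d3 : Order.disp_t).
Variables (L1 : porderType d1) (L2 : porderType d2) (P : porderType d3).
Variables (inf1 : (L1 -> Prop) -> L1) (inf2 : (L2 -> Prop) -> L2).
Hypotheses (inf1_glb : complete_inf inf1) (inf2_glb : complete_inf inf2).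
Variables (n : nat) (conj : 'I_n -> L1 -> L2 -> P).
Variables (sw : 'I_n -> P -> L2 -> L1) (nw : 'I_n -> P -> L1 -> L2).
Hypothesis adj : forall i, adjoint_triple (conj i) (sw i) (nw i).
Variables (A B : Type) (R : A -> B -> P) (sigma : A -> B -> 'I_n).

Local Notation upo := (up inf1 sw R sigma).
Local Notation downo := (down inf2 nw R sigma).

Lemma le_downP (f : A -> L1) b y :
  y <= downo f b <-> (forall a, conj (sigma a b) (f a) y <= R a b).
Proof.
apply: iff_trans (le_infP inf2_glb _ _) _.
split=> [le_y a | le_y _ [a ->]]; last exact/(conj_le_nw (adj _)).
by apply/(conj_le_nw (adj _)); apply: le_y; exists a.
Qed.

Lemma galois_up_down (g : B -> L2) (f : A -> L1) :
  (forall b, g b <= downo f b) <-> (forall a, f a <= upo g a).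
Proof.
split=> [le_g a | le_f b].
  apply/le_infP => // _ [b ->]; apply/(le_sw_nw (adj _)).
  by apply: (proj1 (le_infP inf2_glb _ _) (le_g b)); exists a.
apply/le_infP => // _ [a ->]; apply/(le_sw_nw (adj _)).
by apply: (proj1 (le_infP inf1_glb _ _) (le_f a)); exists b.
Qed.

Lemma le_down_up (g : B -> L2) b : g b <= downo (upo g) b.
Proof. by move: b; apply/galois_up_down. Qed.

Lemma le_up_down (f : A -> L1) a : f a <= upo (downo f) a.
Proof. by move: a; apply/galois_up_down. Qed.

Lemma down_antitone (f f' : A -> L1) :
  (forall a, f a <= f' a) -> forall b, downo f' b <= downo f b.
Proof.
move=> le_ff'; apply/galois_up_down => a.
exact: le_trans (le_ff' a) (le_up_down f' a).
Qed.

Lemma down_up_le_down (g : B -> L2) (f : A -> L1) :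
  (forall b, downo (upo g) b <= downo f b) <-> (forall b, g b <= downo f b).
Proof.
split=> [le_dd b | le_g]; first exact: le_trans (le_down_up g b) (le_dd b).
by apply: down_antitone; apply/galois_up_down.
Qed.

End Derivation.

Theorem corollary14
  (d1 d2 d3 : Order.disp_t)
  (L1 : porderType d1) (L2 : porderType d2) (P : porderType d3)
  (inf1 : (L1 -> Prop) -> L1) (inf2 : (L2 -> Prop) -> L2)
  (Hinf1 : complete_inf inf1) (Hinf2 : complete_inf inf2)
  (n : nat)
  (conj : 'I_n -> L1 -> L2 -> P) (sw : 'I_n -> P -> L2 -> L1) (nw : 'I_n -> P -> L1 -> L2)
  (Hadj : forall i, adjoint_triple (conj i) (sw i) (nw i))
  (A B : eqType) (R : A -> B -> P) (sigma : A -> B -> 'I_n)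
  (a : A) (b : B) (x : L1) (y : L2) :
  let upo := up inf1 sw R sigma in
  let downo := down inf2 nw R sigma in
  let phib := phi (cl_bot inf2) b y in
  let phia := phi (cl_bot inf1) a x in
  concept_le (downo (upo phib), upo phib) (downo phia, upo (downo phia))
  <-> conj (sigma a b) x y <= R a b.
Proof.
move=> upo downo phib phia.
apply: iff_trans (down_up_le_down Hinf1 Hinf2 Hadj R sigma phib phia) _.
apply: iff_trans (phi_forall b y (Q := fun b' l => l <= downo phia b')
                    (fun b' => cl_bot_le Hinf2 _)) _.
apply: iff_trans (le_downP Hinf2 Hadj R sigma phia b y) _.
exact: (phi_forall a x (Q := fun a' l => conj (sigma a' b) l y <= R a' b)
          (fun a' => conj_bot_le (Hadj _) _ _ (cl_bot_le Hinf1))).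
Qed.
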